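(* Let $H$ be a Hilbert space and $\ell\ge1$. The formula \[ \|(\xi_1,\xi_2,\dots,\xi_\ell)\|_{S1}=\operatorname{trace}\sqrt{(\langle\xi_i,\xi_j\rangle)_{i,j=1}^\ell} \] (positive semidefinite square root of the $\ell\times\ell$ Gram matrix) defines a norm on the direct sum $H^\ell=H\oplus\cdots\oplus H$ of $\ell$ copies of $H$. *)

(* Complex Hilbert spaces are modelled as an lmodType over
   the complex numbers R[i] (R : realType) equipped with a MathComp inner
   product {dot U for conjC} (hermitian, linear in the 1st argument,
   conjugate-linear in the 2nd, positive definite), plus Cauchy completeness
   for the induced norm. *)
From HB Require Import structures.
From mathcomp Require Import all_boot all_order all_algebra.
From mathcomp Require Import sesquilinear spectral.
From mathcomp Require Import reals complex.
From Stdlib Require Import ClassicalEpsilon.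

Set Implicit Arguments.
Unset Strict Implicit.
Unset Printing Implicit Defensive.

Import Order.TTheory GRing.Theory Num.Theory Num.Def.
Local Open Scope ring_scope.

Section Defs.
Variable C : numClosedFieldType.

Definition ipnorm (U : lmodType C) (form : {dot U for conjC}) (u : U) : C :=
  sqrtC (form u u).

Definition ip_complete (U : lmodType C) (form : {dot U for conjC}) : Prop :=
  forall u : nat -> U,
    (forall e : C, 0 < e -> exists N : nat, forall m n : nat,
        (N <= m)%N -> (N <= n)%N -> ipnorm form (u m - u n) < e) ->
    exists x : U, forall e : C, 0 < e -> exists N : nat, forall n : nat,
        (N <= n)%N -> ipnorm form (u n - x) < e.

Definition psdmx n (M : 'M[C]_n) : Prop :=
  map_mx Num.conj (M^T) = M /\
  forall v : 'rV[C]_n, 0 <= (v *m M *m map_mx Num.conj (v^T)) 0 0.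

Definition psd_sqrtmx n (A : 'M[C]_n) : 'M[C]_n :=
  epsilon (inhabits 0) (fun S : 'M[C]_n => psdmx S /\ S *m S = A).

Definition gram (U : lmodType C) (form : {dot U for conjC}) l
  (xi : 'I_l -> U) : 'M[C]_l := \matrix_(i, j) form (xi i) (xi j).

Definition S1norm (U : lmodType C) (form : {dot U for conjC}) l
  (xi : 'I_l -> U) : C := \tr (psd_sqrtmx (gram form xi)).

(* N is a norm on H^l = 'I_l -> U (pointwise vector-space structure);
   values in C, so 0 <= N x says N x is a nonnegative real. *)
Definition is_norm_on_power (U : lmodType C) l (N : ('I_l -> U) -> C) : Prop :=
  [/\ forall x, 0 <= N x,
      forall x, N x = 0 -> forall i, x i = 0,
      forall (a : C) x, N (fun i => a *: x i) = `|a| * N x &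
      forall x y, N (fun i => x i + y i) <= N x + N y].

End Defs.

From HB Require Import structures.
From mathcomp Require Import all_boot all_order all_algebra.
From mathcomp Require Import sesquilinear spectral.
From mathcomp Require Import reals complex.
From Stdlib Require Import ClassicalEpsilon FunctionalExtensionality.

(* Write the square root of the Gram matrix of x as V^* diag(E) V with V
   unitary and E >= 0.  The family y = V x then has pairwise orthogonal
   entries with ||y_k|| = E_k, so ||x||_S1 = sum_k ||y_k||.  Hence ||x||_S1 is
   the maximum of Re sum_j <(M x)_j, e_j> over unitary M and families e of
   pairwise orthogonal vectors of norm at most 1: Cauchy-Schwarz gives the
   upper bound and M = V, e_k = y_k / ||y_k|| attain it.  A maximum of real
   parts of linear functionals is subadditive, and it is absolutely
   homogeneous because the admissible families are stable under scalars of
   modulus at most 1. *)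

Set Implicit Arguments.
Unset Strict Implicit.
Unset Printing Implicit Defensive.
Import Order.TTheory GRing.Theory Num.Theory Num.Def.
Local Open Scope ring_scope.
Local Open Scope sesquilinear_scope.

Section PsdMatrix.
Variable C : numClosedFieldType.

Lemma trmxC_mul m n p (A : 'M[C]_(m, n)) (B : 'M[C]_(n, p)) :
  (A *m B)^t* = B^t* *m A^t*.
Proof. by rewrite trmx_mul map_mxM. Qed.

Lemma unitarymx_trC_mul n (V : 'M[C]_n) : V \is unitarymx -> V^t* *m V = 1%:M.
Proof. by move=> V_unitary; rewrite -[V^t*]mul1mx mulmxKtV. Qed.

Lemma mulmx_row_quad m n (W : 'M[C]_(m, n)) (A : 'M[C]_n) k :
  (row k W *m A *m (row k W)^t*) 0 0 = (W *m A *m W^t*) k k.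
Proof.
rewrite !mxE; apply: eq_bigr => j _; rewrite !mxE; congr (_ * _).
by apply: eq_bigr => i _; rewrite !mxE.
Qed.

Lemma diag_quad n (w d : 'rV[C]_n) :
  (w *m diag_mx d *m w^t*) 0 0 = \sum_k d 0 k * `|w 0 k| ^+ 2.
Proof.
rewrite mul_mx_diag !mxE; apply: eq_bigr => k _.
by rewrite !mxE normCK mulrAC mulrC.
Qed.

Definition nneg_row n (d : 'rV[C]_n) := forall k, 0 <= d 0 k.

Lemma diag_mx_trC n (d : 'rV[C]_n) : nneg_row d -> (diag_mx d)^t* = diag_mx d.
Proof.
move=> d_ge0; apply/matrixP => i j; rewrite !mxE.
have [->|ij] := eqVneq i j; last by rewrite !mulr0n conjC0.
by rewrite !mulr1n conj_Creal // ger0_real.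
Qed.

Lemma psdmx_diag_conj n (V : 'M[C]_n) (d : 'rV[C]_n) :
  nneg_row d -> psdmx (V^t* *m diag_mx d *m V).
Proof.
move=> d_ge0; split; first by rewrite !trmxC_mul trmxCK diag_mx_trC // mulmxA.
move=> v; have -> : v *m (V^t* *m diag_mx d *m V) *m map_mx Num.conj v^T
    = (v *m V^t*) *m diag_mx d *m (v *m V^t*)^t*.
  by rewrite trmxC_mul trmxCK !mulmxA.
rewrite diag_quad.
by apply: sumr_ge0 => k _; rewrite mulr_ge0 // exprn_ge0.
Qed.

Lemma psdmx_spectral n (A : 'M[C]_n) : psdmx A ->
  exists V (d : 'rV[C]_n),
    [/\ V \is unitarymx, nneg_row d & A = V^t* *m diag_mx d *m V].
Proof.
case=> A_herm A_quad.
have A_normal : A \is normalmx.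
  by apply/hermitian_normalmx/is_hermitianmxP; rewrite expr0 scale1r A_herm.
set V := spectralmx A; set d := spectral_diag A.
have V_unitary : V \is unitarymx := spectral_unitarymx A.
have A_eq : A = V^t* *m diag_mx d *m V.
  by rewrite -invmx_unitary //; exact/orthomx_spectralP.
exists V, d; split => // k.
have := A_quad (row k V); rewrite mulmx_row_quad A_eq.
rewrite !mulmxA (unitarymxP V_unitary) mul1mx mulmxtVK //.
by rewrite mxE eqxx mulr1n.
Qed.

Lemma psdmx_sqrt n (A : 'M[C]_n) : psdmx A -> exists S, psdmx S /\ S *m S = A.
Proof.
move=> /psdmx_spectral [V [d [V_unitary d_ge0 ->]]].
pose r : 'rV[C]_n := \row_k sqrtC (d 0 k).
have r_ge0 : nneg_row r by move=> k; rewrite mxE sqrtC_ge0.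
exists (V^t* *m diag_mx r *m V); split; first exact: psdmx_diag_conj.
rewrite !mulmxA mulmxtVK // -(mulmxA (V^t*)) mulmx_diag.
congr (_ *m diag_mx _ *m _); apply/rowP => k.
by rewrite !mxE -expr2 sqrtCK.
Qed.

Lemma psd_sqrtmxP n (A : 'M[C]_n) : psdmx A ->
  psdmx (psd_sqrtmx A) /\ psd_sqrtmx A *m psd_sqrtmx A = A.
Proof. by move=> /psdmx_sqrt; exact: epsilon_spec. Qed.

End PsdMatrix.

Section DotForm.
Variables (C : numClosedFieldType) (U : lmodType C) (form : {dot U for conjC}).
Local Notation "''[' u , v ]" := (form u%R v%R) : ring_scope.
Local Notation "''[' u ]" := '[u, u]%R : ring_scope.

(* Cauchy-Schwarz in sesquilinear.v needs a finite-dimensional space, so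
   expand '[u - a v] >= 0 with a = sqrtC '[u] directly. *)
Lemma Re_dot_le_sqrt u v : '[v] <= 1 -> 'Re '[u, v] <= sqrtC '[u].
Proof.
move=> v_le1; have [->|u_neq0] := eqVneq u 0.
  by rewrite linear0l raddf0 sqrtC_ge0 dnorm_ge0.
set a := sqrtC '[u].
have a_gt0 : 0 < a by rewrite sqrtC_gt0 dnorm_gt0.
have a_real : a^* = a by rewrite conj_Creal // gtr0_real.
have ua : '[u] = a ^+ 2 by rewrite sqrtCK.
have := dnorm_ge0 form (u - a *: v).
rewrite dnormB dnormZ linearZr_LR /=; set z := '[u, v].
rewrite a_real rmorphM /= a_real -mulrDr gtr0_norm // ua subr_ge0.
have -> : z + z^* = 2 * 'Re z by rewrite ReE mulrC divfK // pnatr_eq0.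
move=> h; have : a * 2 * 'Re z <= a * 2 * a.
  rewrite -mulrA; apply: le_trans h _.
  have -> : a * 2 * a = a ^+ 2 + a ^+ 2.
    by rewrite mulrAC -expr2 mulr_natr mulr2n.
  by rewrite lerD2l ler_piMr // exprn_ge0 // ltW.
by rewrite ler_pM2l ?mulr_gt0 ?ltr0n.
Qed.

Variable l : nat.
Implicit Types (x y e : 'I_l -> U) (M : 'M[C]_l).

Definition mxact M x : 'I_l -> U := fun j => \sum_i M j i *: x i.

Lemma mxactM A B x : mxact A (mxact B x) = mxact (A *m B) x.
Proof.
apply: functional_extensionality => j; rewrite /mxact.
under eq_bigr do rewrite scaler_sumr.
rewrite exchange_big /=; apply: eq_bigr => i _.
by rewrite mxE scaler_suml; apply: eq_bigr => k _; rewrite scalerA.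
Qed.

Lemma mxact1 x : mxact 1%:M x = x.
Proof.
apply: functional_extensionality => j; rewrite /mxact (bigD1 j) //= big1 ?addr0.
  by rewrite mxE eqxx scale1r.
by move=> i /negPf ij; rewrite mxE eq_sym ij scale0r.
Qed.

Lemma mxactZ M a x k : mxact M (fun i => a *: x i) k = a *: mxact M x k.
Proof.
rewrite /mxact scaler_sumr; apply: eq_bigr => i _.
by rewrite !scalerA mulrC.
Qed.

Lemma mxactD M x y k :
  mxact M (fun i => x i + y i) k = mxact M x k + mxact M y k.
Proof.
by rewrite /mxact -big_split; apply: eq_bigr => i _; rewrite scalerDr.
Qed.

Lemma mxact_adjoint M x e :
  \sum_j '[mxact M x j, e j] = \sum_k '[x k, mxact (M^t*) e k].
Proof.
rewrite /mxact; under eq_bigr do rewrite linear_sumlz.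
rewrite exchange_big /=; apply: eq_bigr => k _.
rewrite linear_sumr /=; apply: eq_bigr => j _.
by rewrite linearZl_LR linearZr_LR /= !mxE conjCK.
Qed.

Lemma gram_mxact M x : gram form (mxact M x) = M *m gram form x *m M^t*.
Proof.
apply/matrixP => j k; rewrite !mxE /mxact linear_sumlz /=.
under eq_bigr do rewrite linearZl_LR /= linear_sumr /= big_distrr /=.
rewrite exchange_big /=; apply: eq_bigr => i _.
rewrite !mxE big_distrl /=; apply: eq_bigr => m _.
by rewrite linearZr_LR /= !mxE -mulrA [_ * conjC _]mulrC.
Qed.

Lemma gram_quad x (v : 'rV[C]_l) :
  (v *m gram form x *m v^t*) 0 0 = '[\sum_i v 0 i *: x i].
Proof.
rewrite mxE linear_sumlz /=.
under [RHS]eq_bigr do rewrite linearZl_LR /= linear_sumr /= big_distrr /=.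
rewrite [RHS]exchange_big /=; apply: eq_bigr => i _.
rewrite !mxE big_distrl /=; apply: eq_bigr => m _.
by rewrite linearZr_LR /= !mxE -mulrA [conjC _ * _]mulrC.
Qed.

Lemma gram_psd x : psdmx (gram form x).
Proof.
split; last by move=> v; rewrite gram_quad dnorm_ge0.
by apply/matrixP => i j; rewrite !mxE [in RHS]hermC /= expr0 mul1r.
Qed.

Lemma S1norm_spectral x : exists V (E : 'rV[C]_l),
  [/\ V \is unitarymx, nneg_row E, S1norm form x = \sum_k E 0 k &
      forall j k, '[mxact V x j, mxact V x k] = (j == k)%:R * E 0 k ^+ 2].
Proof.
have [S_psd SS] := psd_sqrtmxP (gram_psd x).
have [V [E [V_unitary E_ge0 S_eq]]] := psdmx_spectral S_psd.
exists V, E; split => //.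
  by rewrite /S1norm S_eq -mulmxA mxtrace_mulC mulmxtVK // mxtrace_diag.
have gram_Vx : gram form (mxact V x) = diag_mx E *m diag_mx E.
  rewrite gram_mxact -SS S_eq !mulmxA (unitarymxP V_unitary) mul1mx.
  by rewrite !mulmxtVK.
move=> j k; move/matrixP: gram_Vx => /(_ j k); rewrite mxE => ->.
rewrite mulmx_diag !mxE; have [->|jk] := eqVneq j k.
  by rewrite mulr1n mul1r expr2.
by rewrite mulr0n mul0r.
Qed.

Lemma S1norm_ge0 x : 0 <= S1norm form x.
Proof.
by have [V [E [_ E_ge0 -> _]]] := S1norm_spectral x; exact: sumr_ge0.
Qed.

Definition suborthonormal e :=
  (forall j k, j != k -> '[e j, e k] = 0) /\ (forall j, '[e j] <= 1).

Lemma suborthonormalZ c e : `|c| <= 1 -> suborthonormal e ->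
  suborthonormal (fun j => c *: e j).
Proof.
move=> c_le1 [e_ortho e_le1]; split.
  by move=> j k jk; rewrite linearZl_LR linearZr_LR /= e_ortho // !mulr0.
move=> j; rewrite linearZl_LR linearZr_LR /= mulrA -normCK.
by rewrite mulr_ile1 ?exprn_ge0 ?dnorm_ge0 ?exprn_ile1.
Qed.

Lemma dnorm_mxact_le1 M e k : M \is unitarymx -> suborthonormal e ->
  '[mxact M e k] <= 1.
Proof.
move=> /unitarymxP MMt [e_ortho e_le1].
have -> : '[mxact M e k] = \sum_j `|M k j| ^+ 2 * '[e j].
  rewrite /mxact linear_sumlz /=; apply: eq_bigr => j _.
  rewrite linearZl_LR linear_sumr /= (bigD1 j) //= big1 ?addr0.
    by rewrite linearZr_LR /= mulrA mulrC normCK mulrC.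
  by move=> i ij; rewrite linearZr_LR /= e_ortho ?mulr0 // eq_sym.
have <- : \sum_j `|M k j| ^+ 2 = 1.
  move/matrixP: MMt => /(_ k k); rewrite !mxE eqxx mulr1n => <-.
  by apply: eq_bigr => j _; rewrite !mxE normCK.
by apply: ler_sum => j _; rewrite ler_piMr ?exprn_ge0.
Qed.

Lemma S1norm_ge_pairing x M e : M \is unitarymx -> suborthonormal e ->
  'Re (\sum_j '[mxact M x j, e j]) <= S1norm form x.
Proof.
move=> M_unitary e_sub.
have [V [E [V_unitary E_ge0 -> y_dot]]] := S1norm_spectral x.
set y := mxact V x in y_dot.
have -> : x = mxact (V^t*) y by rewrite mxactM unitarymx_trC_mul // mxact1.
rewrite mxactM mxact_adjoint raddf_sum; apply: ler_sum => k _.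
have -> : E 0 k = sqrtC '[y k] by rewrite y_dot eqxx mul1r sqrCK.
apply/Re_dot_le_sqrt/dnorm_mxact_le1 => //.
by rewrite trmxC_unitary mul_unitarymx ?trmxC_unitary.
Qed.

Lemma S1norm_pairing_attained x : exists V e,
  [/\ V \is unitarymx, suborthonormal e &
      S1norm form x = \sum_k '[mxact V x k, e k]].
Proof.
have [V [E [V_unitary E_ge0 -> y_dot]]] := S1norm_spectral x.
pose s k := if E 0 k == 0 then 0 else (E 0 k)^-1.
have s_real k : (s k)^* = s k.
  by rewrite conj_Creal // ger0_real // /s; case: ifP => // _; rewrite invr_ge0.
have sE k : s k * E 0 k = (E 0 k != 0)%:R.
  rewrite /s; case: (eqVneq (E 0 k) 0) => [->|E_neq0] /=.
    by rewrite mul0r.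
  by rewrite mulVf.
exists V, (fun k => s k *: mxact V x k); split => //.
  split => [j k jk|j].
    by rewrite linearZl_LR linearZr_LR /= y_dot (negPf jk) !mul0r !mulr0.
  rewrite linearZl_LR linearZr_LR /= y_dot eqxx mul1r s_real.
  rewrite mulrA -expr2 -exprMn sE; case: (E 0 j != 0) => /=.
    by rewrite expr1n.
  by rewrite expr0n ler01.
apply: eq_bigr => k _.
rewrite linearZr_LR /= y_dot eqxx mul1r s_real expr2 mulrA sE.
by case: (eqVneq (E 0 k) 0) => [->|E_neq0] /=; rewrite ?mul1r ?mul0r ?mulr0.
Qed.

Lemma S1norm_scale_le a x :
  S1norm form (fun i => a *: x i) <= `|a| * S1norm form x.
Proof.
have [V [e [V_unitary e_sub S1_eq]]] :=
  S1norm_pairing_attained (fun i => a *: x i).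
rewrite -(Creal_ReP _ (ger0_real (S1norm_ge0 _))) S1_eq.
pose u := a / `|a|.
have [a_eq u_le1] : a = `|a| * u /\ `|u^*| <= 1.
  rewrite /u; have [->|a_neq0] := eqVneq a 0.
    by rewrite normr0 !mul0r conjC0 normr0 ler01.
  rewrite mulrC divfK ?normr_eq0 //.
  by rewrite norm_conjC normrM normfV normr_id mulfV ?normr_eq0.
have -> : \sum_k '[mxact V (fun i => a *: x i) k, e k] =
    `|a| * \sum_k '[mxact V x k, u^* *: e k].
  rewrite big_distrr /=; apply: eq_bigr => k _.
  by rewrite mxactZ linearZl_LR linearZr_LR /= conjCK mulrA -a_eq.
rewrite ReMl ?normr_real // ler_wpM2l //.
exact/S1norm_ge_pairing/suborthonormalZ.
Qed.

Lemma S1norm_eq0 x : S1norm form x = 0 -> forall i, x i = 0.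
Proof.
have [V [E [V_unitary E_ge0 -> y_dot]]] := S1norm_spectral x.
move=> /(psumr_eq0P (fun k _ => E_ge0 k)) E0 i.
have y0 : mxact V x = fun=> 0.
  apply: functional_extensionality => k; apply/eqP.
  by rewrite -(dnorm_eq0 form) y_dot eqxx mul1r E0 ?expr0n.
have -> : x = mxact (V^t*) (mxact V x).
  by rewrite mxactM unitarymx_trC_mul // mxact1.
by rewrite y0 /mxact big1 // => j _; rewrite scaler0.
Qed.

Lemma S1norm_scale a x :
  S1norm form (fun i => a *: x i) = `|a| * S1norm form x.
Proof.
apply/le_anti; rewrite S1norm_scale_le /=.
have [->|a_neq0] := eqVneq a 0; first by rewrite normr0 mul0r S1norm_ge0.
have := S1norm_scale_le a^-1 (fun i => a *: x i).
have -> : (fun i => a^-1 *: (a *: x i)) = x.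
  by apply: functional_extensionality => i; rewrite scalerA mulVf // scale1r.
by rewrite normfV ler_pdivlMl // normr_gt0.
Qed.

Lemma S1norm_triangle x y :
  S1norm form (fun i => x i + y i) <= S1norm form x + S1norm form y.
Proof.
have [V [e [V_unitary e_sub S1_eq]]] :=
  S1norm_pairing_attained (fun i => x i + y i).
rewrite -(Creal_ReP _ (ger0_real (S1norm_ge0 _))) S1_eq.
under eq_bigr do rewrite mxactD linearDl.
by rewrite big_split raddfD lerD ?S1norm_ge_pairing.
Qed.

End DotForm.

Theorem lemma1p7 (R : realType) (H : lmodType R[i])
  (form : {dot H for conjC}) (Hcomplete : ip_complete form)
  (l : nat) (hl : (1 <= l)%N) :
  is_norm_on_power (@S1norm _ H form l).
Proof.
split.
- exact: S1norm_ge0.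
- exact: S1norm_eq0.
- exact: S1norm_scale.
- exact: S1norm_triangle.
Qed.
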